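(* Let $R$ be a ring with identity. Then every element of $R$ is either a sum or a difference of a nilpotent and an idempotent if and only if either $R$ is nil clean, or $R \cong R_1 \times R_2$ where $R_1$ is a nil clean ring and $R_2$ is a ring with $R_2/\operatorname{Nil}^*(R_2) \cong \mathbb{Z}_3$.
   Context: Rings are associative with identity. A ring is nil clean if every element is the sum of an idempotent and a nilpotent. The upper nilradical $\operatorname{Nil}^*(S)$ of a ring $S$ is the largest nil ideal of $S$. $\mathbb{Z}_3$ is the ring of integers modulo $3$. A ring in which every element is either a sum or a difference of a nilpotent and an idempotent is called weakly nil-clean. *)

From HB Require Import structures.
From mathcomp Require Import all_boot all_algebra.
Set Implicit Arguments. Unset Strict Implicit. Unset Printing Implicit Defensive.
Import GRing.Theory.
Local Open Scope ring_scope.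

(* Rings: associative with identity, possibly non-commutative, possibly the
   zero ring (pzRingType). *)

Definition nilpotent_el {R : pzRingType} (x : R) : Prop := exists n : nat, x ^+ n = 0.
Definition idempotent_el {R : pzRingType} (e : R) : Prop := e * e = e.

Definition nil_clean (R : pzRingType) : Prop :=
  forall x : R, exists e q : R, idempotent_el e /\ nilpotent_el q /\ x = e + q.

Definition weakly_nil_clean (R : pzRingType) : Prop :=
  forall x : R, exists q e : R, nilpotent_el q /\ idempotent_el e /\
    (x = q + e \/ x = q - e).

Definition two_sided_ideal {R : pzRingType} (I : R -> Prop) : Prop :=
  I 0 /\ (forall x y, I x -> I y -> I (x - y)) /\
  (forall r x, I x -> I (r * x)) /\ (forall r x, I x -> I (x * r)).

Definition nil_ideal {R : pzRingType} (I : R -> Prop) : Prop :=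
  two_sided_ideal I /\ (forall x, I x -> nilpotent_el x).

(* upper nilradical Nil*(R): the largest nil ideal, i.e. the union (= sum) of
   all nil ideals of R *)
Definition upper_nilradical (R : pzRingType) (x : R) : Prop :=
  exists I : R -> Prop, nil_ideal I /\ I x.

Definition ring_iso (R S : pzRingType) : Prop :=
  exists f : {rmorphism R -> S}, bijective f.

(* S / Nil*(S) ≅ T, expressed via the first isomorphism theorem: a surjective
   ring morphism S -> T whose kernel is exactly Nil*(S) *)
Definition quot_upper_nilradical_iso (S T : pzRingType) : Prop :=
  exists phi : {rmorphism S -> T}, (forall t : T, exists s : S, phi s = t) /\
    (forall x : S, phi x = 0 <-> upper_nilradical x).

From HB Require Import structures.
From mathcomp Require Import all_boot all_algebra.
From Stdlib Require Import ClassicalEpsilon.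
Set Implicit Arguments. Unset Strict Implicit. Unset Printing Implicit Defensive.
Import GRing.Theory.
Local Open Scope ring_scope.

(* Writing 2 = q + e or 2 = q - e shows that 6 is nilpotent, say 6^n = 0.  A Bezout
   relation between 2^n and 3^n yields an integer c such that e = c is a central
   idempotent with 2^n (1 - e) = 0 and 3^n e = 0, so R = (1 - e)R x eR with 2
   nilpotent in the first factor and 3 nilpotent in the second.  When 2 is nilpotent,
   q - e = (q - 2e) + e turns every difference into a sum, so the ring is nil clean.
   When 3 is nilpotent, 2 is invertible, and in a weakly nil clean ring this forces
   every idempotent to be 0 or 1.  Hence for each x one of x, x - 1, x + 1 is
   nilpotent, every element is nilpotent or invertible, the nilpotents form an
   ideal, and x |-> k, where x - k is nilpotent, is a surjection onto Z_3 whose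
   kernel is Nil*.  Conversely, such a product is weakly nil clean componentwise. *)

Definition invertible {R : pzRingType} (x : R) : Prop :=
  exists2 v, v * x = 1 & x * v = 1.

Section Nilpotent.
Variable R : pzRingType.
Implicit Types x y a e q : R.

Lemma nilpotentN x : nilpotent_el x -> nilpotent_el (- x).
Proof. by move=> [n xn0]; exists n; rewrite exprNn xn0 mulr0. Qed.

Lemma nilpotentM_comm x y : GRing.comm x y -> nilpotent_el x -> nilpotent_el (x * y).
Proof. by move=> cxy [n xn0]; exists n; rewrite exprMn_comm // xn0 mul0r. Qed.

(* k is central, so (x + k y)^m = x^m + k z for some z. *)
Lemma nilpotentD_natM (k : nat) x y :
  nilpotent_el x -> nilpotent_el (k%:R : R) -> nilpotent_el (x + k%:R * y).
Proof.
move=> [n xn0] [j kj0].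
have expr_mod_k m : exists z, (x + k%:R * y) ^+ m = x ^+ m + k%:R * z.
  elim: m => [|m [z IH]]; first by exists 0; rewrite mulr0 addr0.
  exists (x ^+ m * y + z * x + z * (k%:R * y)).
  rewrite exprSr IH exprSr !mulrDl !mulrDr -!addrA; congr (_ + _).
  by rewrite !mulrA -(commr_nat (x ^+ m) k).
have [z xykn] := expr_mod_k n.
exists (n * j)%N; rewrite exprM xykn xn0 add0r exprMn_comm ?kj0 ?mul0r //.
exact/commr_sym/commr_nat.
Qed.

Lemma nilpotent0 : nilpotent_el (0 : R).
Proof. by exists 1%N; rewrite expr1. Qed.

Lemma idempotent_1sub e : idempotent_el e -> idempotent_el (1 - e).
Proof. by rewrite /idempotent_el => ee; rewrite mulrBl mul1r mulrBr mulr1 ee subrr subr0. Qed.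

Lemma idempotent_nilpotent_eq0 x : idempotent_el x -> nilpotent_el x -> x = 0.
Proof.
move=> xx [[|n] xn0]; first by rewrite -[x]mul1r -(expr0 x) xn0 mul0r.
have <- : x ^+ n.+1 = x by elim: n {xn0} => [|n IH]; rewrite ?expr1 // exprS IH xx.
exact: xn0.
Qed.

Lemma nilpotent_linv_trivial a y : nilpotent_el a -> y * a = 1 -> (1 : R) = 0.
Proof.
move=> [n an0] ya1.
have yan k : y ^+ k * a ^+ k = 1.
  elim: k => [|k IH]; first by rewrite mulr1.
  by rewrite exprSr exprS -mulrA (mulrA y) ya1 mul1r.
by rewrite -(yan n) an0 mulr0.
Qed.

Lemma nilpotent_rinv_trivial a y : nilpotent_el a -> a * y = 1 -> (1 : R) = 0.
Proof.
move=> [n an0] ay1.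
have any k : a ^+ k * y ^+ k = 1.
  elim: k => [|k IH]; first by rewrite mulr1.
  by rewrite exprSr exprS -mulrA (mulrA a) ay1 mul1r.
by rewrite -(any n) an0 mul0r.
Qed.

Lemma nilpotent_invertible_trivial x : nilpotent_el x -> invertible x -> (1 : R) = 0.
Proof. by move=> Nx [v vx _]; exact: nilpotent_linv_trivial Nx vx. Qed.

Lemma invertible_1sub q : nilpotent_el q -> invertible (1 - q).
Proof.
move=> [n qn0]; have geom : (1 - q) * (\sum_(i < n) q ^+ i) = 1.
  by rewrite -opprB mulNr -subrX1 qn0 sub0r opprK.
exists (\sum_(i < n) q ^+ i) => //; rewrite -[RHS]geom.
by apply: commrB; [exact: commr1 | apply/commr_sym/commr_sum => i _; exact: commrX].
Qed.

Lemma invertible1 : invertible (1 : R).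
Proof. by exists 1; rewrite mulr1. Qed.

Lemma invertibleN x : invertible x -> invertible (- x).
Proof. by move=> [v vx xv]; exists (- v); rewrite mulrNN. Qed.

Lemma invertible_nilpotent_addr1 x : nilpotent_el (x + 1) -> invertible x.
Proof. by move=> /invertible_1sub /invertibleN; rewrite opprB addrK. Qed.

Lemma invertible_nilpotent_subr1 x : nilpotent_el (x - 1) -> invertible x.
Proof. by move=> /nilpotentN /invertible_1sub; rewrite opprB subKr. Qed.

Lemma mulrX_rinv_eq0 y a b n : a * b = 1 -> y * a ^+ n = 0 -> y = 0.
Proof.
move=> ab1; elim: n y => [|n IH] y; first by rewrite mulr1.
by rewrite exprS mulrA => /IH ya0; rewrite -[y]mulr1 -ab1 mulrA ya0 mul0r.
Qed.

End Nilpotent.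

Lemma nil_clean_weakly_nil_clean (R : pzRingType) : nil_clean R -> weakly_nil_clean R.
Proof.
move=> NC x; have [e [q [ee [Nq ->]]]] := NC x.
by exists q, e; split=> //; split=> //; left; rewrite addrC.
Qed.

Section WeaklyNilClean.
Variables (R : pzRingType) (W : weakly_nil_clean R).

(* If 2 = q + e, resp. 2 = q - e, then q commutes with e and
   q (3 - q) = 2, resp. q (5 - q) = 6. *)
Lemma weakly_nil_clean_nilpotent6 : nilpotent_el (6%:R : R).
Proof.
have [q [e [Nq [ee [two_eq|two_eq]]]]] := W 2%:R.
  have q_eq : q = 2%:R - e by rewrite two_eq addrK.
  have two_fact : q * (3%:R - q) = 2%:R.
    rewrite {2}q_eq opprB addrCA -natrB // [e + _]addrC mulrDr mulr1.
    by rewrite q_eq mulrBl ee mulr_natl mulr2n addrK subrK.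
  have N2 : nilpotent_el (2%:R : R).
    by rewrite -two_fact; apply: nilpotentM_comm => //; exact/commrB/commr_refl/commr_nat.
  by rewrite (natrM R 2 3); apply: nilpotentM_comm => //; exact: commr_nat.
have q_eq : q = 2%:R + e by rewrite two_eq subrK.
have six_fact : q * (5%:R - q) = 6%:R.
  rewrite {2}q_eq opprD addrA -natrB // (_ : (5 - 2 = 3)%N) // mulrBr mulr_natr.
  by rewrite q_eq mulrDl ee mulr_natl mulrnDl -mulrnA mulrSr addrK.
by rewrite -six_fact; apply: nilpotentM_comm => //; exact/commrB/commr_refl/commr_nat.
Qed.

(* q - e = (q - 2 e) + e, where q - 2 e is nilpotent. *)
Lemma weakly_nil_clean_nilpotent2 : nilpotent_el (2%:R : R) -> nil_clean R.
Proof.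
move=> N2 x; have [q [e [Nq [ee [->|->]]]]] := W x; first by exists e, q; rewrite addrC.
exists e, (q + 2%:R * - e); split=> //; split; first exact: nilpotentD_natM.
by rewrite mulrN mulr_natl mulr2n opprD addrCA addNKr.
Qed.

End WeaklyNilClean.

Section ThreeNilpotent.
Variables (R : pzRingType) (N3 : nilpotent_el (3%:R : R)).
Implicit Types a b e f g h q r t x : R.

Lemma invertible_natr2 : invertible (2%:R : R).
Proof. by apply: invertible_nilpotent_addr1; rewrite -mulrSr. Qed.

Lemma invertible_natr2_sub t : nilpotent_el t -> invertible (2%:R - t).
Proof.
move=> Nt; apply: invertible_nilpotent_addr1.
rewrite addrAC -mulrSr -opprB -[X in t - X]mulr1 -mulrN.
exact/nilpotentN/nilpotentD_natM.
Qed.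

(* For t = g + h and d = g - h one has t d + d t = 2 d, hence t^n d = d (2 - t)^n;
   as 2 - t is invertible, d = 0 and t = 2 h. *)
Lemma idempotents_nilpotentD_eq0 g h :
  idempotent_el g -> idempotent_el h -> nilpotent_el (g + h) -> h = 0.
Proof.
move=> gg hh Nt; set t := g + h in Nt; set d := g - h.
have anticomm : t * d + d * t = d *+ 2.
  rewrite /t /d mulrDl !mulrBr gg hh mulrBl !mulrDr gg hh opprD.
  rewrite addrACA (addrACA g) addNr addr0 (addrACA (h * g)) subrr add0r.
  by rewrite mulr2n addrACA.
have td : t * d = d * (2%:R - t) by rewrite [RHS]mulrBr (mulr_natr d 2) -anticomm addrK.
have tXd k : t ^+ k * d = d * (2%:R - t) ^+ k.
  elim: k => [|k IH]; first by rewrite mul1r mulr1.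
  by rewrite exprSr -mulrA td mulrA IH -mulrA -exprSr.
have [n tn0] := Nt; have [v _ inv2t] := invertible_natr2_sub Nt.
have d0 : d = 0 by apply: (mulrX_rinv_eq0 (n := n) inv2t); rewrite -tXd tn0 mul0r.
have t_eq : t = h * 2%:R by rewrite /t (subr0_eq d0) mulr_natr mulr2n.
have [w _ inv2] := invertible_natr2.
apply: idempotent_nilpotent_eq0 => //; exists n.
apply: (mulrX_rinv_eq0 (n := n) inv2).
by rewrite -exprMn_comm -?t_eq //; exact: commr_nat.
Qed.

Lemma idempotent_eq0_of_nil_clean_sub e h f q : idempotent_el h -> idempotent_el f ->
  e + h = 1 -> nilpotent_el q -> e - h = q + f -> h = 0.
Proof.
move=> hh ff eh1 Nq ehqf.
apply: (idempotents_nilpotentD_eq0 (idempotent_1sub ff)) => //.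
have -> : 1 - f + h = q + 3%:R * h.
  have q_eq : q = e - h - f by rewrite ehqf addrK.
  have e_eq : e = 1 - h by rewrite -eh1 addrK.
  rewrite q_eq e_eq mulr_natl !mulrS mulr0n addr0.
  by rewrite (addrAC (1 - h - h)) !addrA !subrK addrAC.
exact: nilpotentD_natM.
Qed.

Hypothesis W : weakly_nil_clean R.

Lemma weakly_nil_clean_idempotent e : idempotent_el e -> e = 0 \/ e = 1.
Proof.
move=> ee; have ee' := idempotent_1sub ee.
have [q [f [Nq [ff [x_eq|x_eq]]]]] := W (e - (1 - e)).
- right; apply/esym/subr0_eq.
  apply: (idempotent_eq0_of_nil_clean_sub (e := e) ee' ff _ Nq).
    by rewrite addrC subrK.
  by rewrite x_eq addrC.
- left; apply: (idempotent_eq0_of_nil_clean_sub (e := 1 - e) ee ff _ (nilpotentN Nq)).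
    by rewrite subrK.
  by rewrite -opprB x_eq opprB addrC.
Qed.

Lemma weakly_nil_clean_trichotomy x :
  nilpotent_el x \/ nilpotent_el (x - 1) \/ nilpotent_el (x + 1).
Proof.
have [q [f [Nq [ff x_eq]]]] := W x.
case: (weakly_nil_clean_idempotent ff) x_eq => -> [] ->.
- by left; rewrite addr0.
- by left; rewrite subr0.
- by right; left; rewrite addrK.
- by right; right; rewrite subrK.
Qed.

Hypothesis nontrivial : (1 : R) <> 0.

Lemma nilpotent_or_invertible x : nilpotent_el x \/ invertible x.
Proof.
case: (weakly_nil_clean_trichotomy x) => [|[]]; first by left.
  by right; exact: invertible_nilpotent_subr1.
by right; exact: invertible_nilpotent_addr1.
Qed.

Lemma nilpotentMl r a : nilpotent_el a -> nilpotent_el (r * a).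
Proof.
move=> Na; case: (nilpotent_or_invertible (r * a)) => // [[v vra _]].
by case: nontrivial; apply: (nilpotent_linv_trivial Na (y := v * r)); rewrite -mulrA.
Qed.

Lemma nilpotentMr r a : nilpotent_el a -> nilpotent_el (a * r).
Proof.
move=> Na; case: (nilpotent_or_invertible (a * r)) => // [[v _ arv]].
by case: nontrivial; apply: (nilpotent_rinv_trivial Na (y := r * v)); rewrite mulrA.
Qed.

(* If (a + b) w = 1 then a w = 1 - b w is both nilpotent and invertible. *)
Lemma nilpotentD a b : nilpotent_el a -> nilpotent_el b -> nilpotent_el (a + b).
Proof.
move=> Na Nb; case: (nilpotent_or_invertible (a + b)) => // [[w _ abw]].
have [v vbw _] := invertible_1sub (nilpotentMr w Nb).
case: nontrivial; apply: (nilpotent_linv_trivial (nilpotentMr w Na) (y := v)).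
by rewrite -vbw -abw mulrDl addrK.
Qed.

Lemma nilpotent_nil_ideal : nil_ideal (@nilpotent_el R).
Proof.
split=> //; split; first exact: nilpotent0.
split; first by move=> a b Na Nb; apply/nilpotentD/nilpotentN.
by split=> r a; [apply: nilpotentMl | apply: nilpotentMr].
Qed.

Lemma nilpotent_natr_Z3 k : nilpotent_el (k%:R : R) -> (k%:R : 'Z_3) = 0.
Proof.
move=> Nk; have Nr : nilpotent_el ((k %% 3)%N%:R : R).
  have -> : ((k %% 3)%N%:R : R) = k%:R - (k %/ 3)%N%:R * 3%:R.
    by rewrite -natrM [X in _ = X%:R - _](divn_eq k 3) natrD addrAC subrr add0r.
  exact/nilpotentD/nilpotentN/nilpotentMl.
rewrite -Zp_nat_mod //; have : (k %% 3 < 3)%N by rewrite ltn_pmod.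
case: (k %% 3)%N Nr => [|[|[|]]] // Nr _; case: nontrivial.
  by apply: nilpotent_invertible_trivial Nr _; rewrite mulr1n; exact: invertible1.
exact: nilpotent_invertible_trivial Nr invertible_natr2.
Qed.

Definition residue3 x : 'Z_3 :=
  epsilon (inhabits 0) (fun k : 'Z_3 => nilpotent_el (x - k%:R)).

Lemma residue3P x : nilpotent_el (x - (residue3 x)%:R).
Proof.
apply: (epsilon_spec (inhabits 0) (fun k : 'Z_3 => nilpotent_el (x - k%:R))).
case: (weakly_nil_clean_trichotomy x) => [Nx|[Nx|Nx]].
- by exists 0; rewrite subr0.
- by exists 1.
- (* x - 2 = (x + 1) - 3 *)
  exists 2; rewrite -[X in x - X](addrK 1) -mulrSr opprB addrA -(mulr1 3%:R) -mulrN.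
  exact: nilpotentD_natM.
Qed.

(* x - m and x - v nilpotent give m + 2 v = (x - v) - (x - m) + 3 v nilpotent. *)
Lemma residue3_eq x m : nilpotent_el (x - m%:R) -> residue3 x = m%:R.
Proof.
move=> Nm; set v := residue3 x.
have : nilpotent_el ((m + v * 2)%N%:R : R).
  have -> : ((m + v * 2)%N%:R : R) = x - v%:R - (x - m%:R) + v%:R * 3%:R.
    rewrite opprB addrCA [x - _ - _]addrAC subrr add0r natrD natrM -addrA; congr (_ + _).
    by rewrite !mulr_natr [in RHS]mulrSr addrC addrK.
  exact: nilpotentD (nilpotentD (residue3P x) (nilpotentN Nm)) (nilpotentMl _ N3).
move/nilpotent_natr_Z3/eqP; rewrite natrD natrM natr_Zp addr_eq0 => /eqP ->.
by rewrite -mulrN (_ : - 2%:R = 1 :> 'Z_3) ?mulr1 //; apply/eqP.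
Qed.

Lemma residue3_nat m : residue3 m%:R = m%:R.
Proof. by apply: residue3_eq; rewrite subrr; exact: nilpotent0. Qed.

Lemma residue3D x y : residue3 (x + y) = residue3 x + residue3 y.
Proof.
rewrite -[residue3 x]natr_Zp -[residue3 y]natr_Zp -natrD; apply: residue3_eq.
by rewrite natrD opprD addrACA; apply: nilpotentD; exact: residue3P.
Qed.

Lemma residue3M x y : residue3 (x * y) = residue3 x * residue3 y.
Proof.
rewrite -[residue3 x]natr_Zp -[residue3 y]natr_Zp -natrM; apply: residue3_eq.
rewrite natrM (_ : x * y - _ = (x - (residue3 x)%:R) * y + (residue3 x)%:R * (y - (residue3 y)%:R)).
  exact: nilpotentD (nilpotentMr _ (residue3P x)) (nilpotentMl _ (residue3P y)).
by rewrite mulrBl mulrBr addrA subrK.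
Qed.

End ThreeNilpotent.

Lemma weakly_nil_clean_quot_Z3 (R : pzRingType) :
  weakly_nil_clean R -> nilpotent_el (3%:R : R) -> (1 : R) != 0 ->
  quot_upper_nilradical_iso R 'Z_3.
Proof.
move=> W N3 /eqP nz.
pose additive := GRing.isNmodMorphism.Build R 'Z_3 (@residue3 R)
  (residue3_nat N3 W nz 0, residue3D N3 W nz).
pose multiplicative := GRing.isMonoidMorphism.Build R 'Z_3 (@residue3 R)
  (residue3_nat N3 W nz 1, residue3M N3 W nz).
pose f : {rmorphism R -> 'Z_3} := HB.pack (@residue3 R) additive multiplicative.
exists f; split=> [k|x].
  by exists k%:R; rewrite /= (residue3_nat N3 W nz) natr_Zp.
split=> [/= rx0|[I [[_ nilI] Ix]]].
  exists (@nilpotent_el R); split; first exact: nilpotent_nil_ideal.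
  by have := residue3P N3 W x; rewrite rx0 subr0.
by rewrite /= (residue3_eq N3 W nz (m := 0)) // subr0; exact: nilI.
Qed.

Section RingMorphism.
Variables (R S : pzRingType) (f : {rmorphism R -> S}).

Lemma rmorph_nilpotent x : nilpotent_el x -> nilpotent_el (f x).
Proof. by move=> [n xn0]; exists n; rewrite -rmorphXn xn0 rmorph0. Qed.

Lemma rmorph_idempotent x : idempotent_el x -> idempotent_el (f x).
Proof. by rewrite /idempotent_el -rmorphM => ->. Qed.

Lemma weakly_nil_clean_rmorph_surj :
  (forall y, exists x, f x = y) -> weakly_nil_clean R -> weakly_nil_clean S.
Proof.
move=> f_surj W y; have [x <-] := f_surj y; have [q [e [Nq [ee x_eq]]]] := W x.
exists (f q), (f e); split; first exact: rmorph_nilpotent.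
split; first exact: rmorph_idempotent.
by case: x_eq => ->; [left; rewrite rmorphD | right; rewrite rmorphB].
Qed.

End RingMorphism.

Lemma weakly_nil_clean_ring_iso (R S : pzRingType) :
  ring_iso R S -> weakly_nil_clean S -> weakly_nil_clean R.
Proof.
move=> [f [g fK gK]].
pose g_additive := GRing.isNmodMorphism.Build S R g (can2_nmod_morphism fK gK).
pose g_multiplicative := GRing.isMonoidMorphism.Build S R g (can2_monoid_morphism fK gK).
pose g_rmorph : {rmorphism S -> R} := HB.pack g g_additive g_multiplicative.
by apply: (@weakly_nil_clean_rmorph_surj _ _ g_rmorph) => x; exists (f x); exact: fK.
Qed.

Record central_idempotent (R : pzRingType) := CentralIdempotent {
  cidem : R;
  cidem_idem : idempotent_el cidem;
  cidem_central : forall x, cidem * x = x * cidem }.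

Section Corner.
Variables (R : pzRingType) (ce : central_idempotent R).
Local Notation e := (cidem ce).
Implicit Types x y : R.

Definition corner := {x : R | x * e == x}.
HB.instance Definition _ := Choice.copy corner {x : R | x * e == x}.
HB.instance Definition _ := SubType.copy corner {x : R | x * e == x}.

Fact corner_zmod_closed : zmod_closed (fun x : R => x * e == x).
Proof.
by split=> [|x y]; rewrite !unfold_in ?mul0r // => /eqP xe /eqP ye; rewrite mulrBl xe ye.
Qed.
HB.instance Definition _ := GRing.SubChoice_isSubZmodule.Build R _ corner corner_zmod_closed.

Fact corner_proj_subproof x : x * e * e == x * e.
Proof. by rewrite -mulrA cidem_idem. Qed.

Definition corner_proj x : corner := exist _ (x * e) (corner_proj_subproof x).

Lemma val_corner_proj x : val (corner_proj x) = x * e. Proof. by []. Qed.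

Lemma val_cornerK (a : corner) : val a * e = val a. Proof. exact/eqP/(valP a). Qed.

Lemma val_corner0 : val (0 : corner) = 0. Proof. exact: raddf0. Qed.

Lemma val_cornerD (a b : corner) : val (a + b) = val a + val b. Proof. exact: raddfD. Qed.

Definition corner_mul (a b : corner) := corner_proj (val a * val b).

Lemma val_corner_mul a b : val (corner_mul a b) = val a * val b.
Proof. by rewrite val_corner_proj -mulrA val_cornerK. Qed.

Fact corner_mulA : associative corner_mul.
Proof. by move=> a b c; apply: val_inj; rewrite !val_corner_mul mulrA. Qed.

Fact corner_mul1r : left_id (corner_proj 1) corner_mul.
Proof.
by move=> a; apply: val_inj; rewrite val_corner_mul val_corner_proj mul1r cidem_central val_cornerK.
Qed.

Fact corner_mulr1 : right_id (corner_proj 1) corner_mul.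
Proof. by move=> a; apply: val_inj; rewrite val_corner_mul val_corner_proj mul1r val_cornerK. Qed.

Fact corner_mulDl : left_distributive corner_mul +%R.
Proof. by move=> a b c; apply: val_inj; rewrite !(val_corner_mul, val_cornerD) mulrDl. Qed.

Fact corner_mulDr : right_distributive corner_mul +%R.
Proof. by move=> a b c; apply: val_inj; rewrite !(val_corner_mul, val_cornerD) mulrDr. Qed.

HB.instance Definition _ := GRing.Zmodule_isPzRing.Build corner
  corner_mulA corner_mul1r corner_mulr1 corner_mulDl corner_mulDr.

Lemma val_corner1 : val (1 : corner) = e.
Proof. by rewrite val_corner_proj mul1r. Qed.

Fact corner_proj_nmod_morphism : nmod_morphism corner_proj.
Proof.
split=> [|x y]; apply: val_inj; rewrite ?val_cornerD !val_corner_proj.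
  by rewrite mul0r val_corner0.
by rewrite mulrDl.
Qed.

Fact corner_proj_monoid_morphism : monoid_morphism corner_proj.
Proof.
split=> // x y; apply: val_inj; rewrite val_corner_mul !val_corner_proj.
by rewrite -!mulrA (mulrA e) (cidem_central ce y) -mulrA cidem_idem.
Qed.

HB.instance Definition _ := GRing.isNmodMorphism.Build R corner corner_proj
  corner_proj_nmod_morphism.
HB.instance Definition _ := GRing.isMonoidMorphism.Build R corner corner_proj
  corner_proj_monoid_morphism.

Lemma corner_proj_surj (a : corner) : exists x, corner_proj x = a.
Proof. by exists (val a); apply: val_inj; rewrite val_corner_proj val_cornerK. Qed.

Lemma weakly_nil_clean_corner : weakly_nil_clean R -> weakly_nil_clean corner.
Proof. exact: weakly_nil_clean_rmorph_surj corner_proj_surj. Qed.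

Lemma corner_natr_nilpotent (k n : nat) : (k ^ n)%:R * e = 0 -> nilpotent_el (k%:R : corner).
Proof.
move=> kne; exists n; apply: val_inj.
by rewrite -(rmorph_nat corner_proj) -rmorphXn -natrX val_corner_proj kne val_corner0.
Qed.

Lemma corner_oner_neq0 : e != 0 :> R -> (1 : corner) != 0.
Proof. by apply: contra => /eqP/(congr1 val); rewrite val_corner1 val_corner0 => ->. Qed.

End Corner.

Section CornerSplit.
Variables (R : pzRingType) (ce : central_idempotent R).
Local Notation e := (cidem ce).

Fact cidem_compl_central x : (1 - e) * x = x * (1 - e).
Proof. by rewrite mulrBl mulrBr mul1r mulr1 cidem_central. Qed.

Definition cidem_compl : central_idempotent R :=
  CentralIdempotent (idempotent_1sub (cidem_idem ce)) cidem_compl_central.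

Definition corner_split (x : R) : (corner cidem_compl * corner ce)%type :=
  (corner_proj cidem_compl x, corner_proj ce x).

Fact corner_split_nmod_morphism : nmod_morphism corner_split.
Proof. by split=> [|x y]; rewrite /corner_split ?raddf0 ?raddfD. Qed.

Fact corner_split_monoid_morphism : monoid_morphism corner_split.
Proof. by split=> [|x y]; rewrite /corner_split ?rmorph1 ?rmorphM. Qed.

HB.instance Definition _ := GRing.isNmodMorphism.Build R _ corner_split
  corner_split_nmod_morphism.
HB.instance Definition _ := GRing.isMonoidMorphism.Build R _ corner_split
  corner_split_monoid_morphism.

Lemma ring_iso_corner_split : ring_iso R (corner cidem_compl * corner ce)%type.
Proof.
exists corner_split; exists (fun p => val p.1 + val p.2) => [x|[a b]].
  by rewrite /= -mulrDr subrK mulr1.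
have ae0 : val a * e = 0.
  by rewrite -(val_cornerK a) -mulrA /= mulrBl mul1r cidem_idem subrr mulr0.
have be0 : val b * (1 - e) = 0.
  by rewrite -(val_cornerK b) -mulrA mulrBr mulr1 cidem_idem subrr mulr0.
congr pair; apply: val_inj; rewrite val_corner_proj mulrDl ?ae0 ?be0.
  by rewrite addr0 val_cornerK.
by rewrite add0r val_cornerK.
Qed.

End CornerSplit.

Lemma coprime_natr_idempotent (R : pzRingType) (m k : nat) :
  (0 < m)%N -> coprime m k -> (m * k)%:R = 0 :> R ->
  exists c : nat, [/\ idempotent_el (c%:R : R), k%:R * c%:R = 0 :> R
                    & m%:R * (1 - c%:R) = 0 :> R].
Proof.
move=> m_gt0 cop mk0; have [a _] := Bezoutl k m_gt0.
rewrite (eqP cop) => /dvdnP[u u_eq].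
have mk_mul j : (j * (m * k))%:R = 0 :> R by rewrite natrM mk0 mulr0.
exists (u * m)%N; split.
- by rewrite /idempotent_el -natrM -{2}u_eq mulnDr muln1 mulnACA natrD mk_mul addr0.
- by rewrite -natrM (mulnCA k u m) (mulnC k m) mk_mul.
- by rewrite -u_eq natrD opprD addrA subrr add0r mulrN -natrM (mulnCA m a k) mk_mul oppr0.
Qed.

Lemma nilpotent_pair (A B : pzRingType) (a : A) (b : B) :
  nilpotent_el a -> nilpotent_el b -> nilpotent_el ((a, b) : A * B).
Proof.
move=> [n an0] [j bj0]; exists (n + j)%N.
have pairX (p : A * B) i : p ^+ i = (p.1 ^+ i, p.2 ^+ i).
  by elim: i => [|i IH]; rewrite ?expr0 // !exprS IH.
by rewrite pairX /= !exprD an0 bj0 mul0r mulr0.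
Qed.

Lemma weakly_nil_clean_prod (A B : pzRingType) :
  nil_clean A -> weakly_nil_clean B -> weakly_nil_clean (A * B)%type.
Proof.
move=> NA WB [a b]; have [q [e [Nq [ee [b_eq|b_eq]]]]] := WB b.
  have [f [p [ff [Np a_eq]]]] := NA a.
  exists (p, q), (f, e); split; first exact: nilpotent_pair.
  split; first by rewrite /idempotent_el; congr pair.
  by left; rewrite a_eq b_eq [f + p]addrC.
have [f [p [ff [Np a_eq]]]] := NA (- a).
exists (- p, q), (f, e); split; first exact/nilpotent_pair/Nq/nilpotentN.
split; first by rewrite /idempotent_el; congr pair.
by right; rewrite b_eq -[a]opprK a_eq opprD addrC.
Qed.

Lemma Z3_cases (k : 'Z_3) : [\/ k = 0, k = 1 | k = 2].
Proof.
case: k => [[|[|[|]]]] //= ?; [constructor 1 | constructor 2 | constructor 3];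
  exact: val_inj.
Qed.

Lemma quot_Z3_weakly_nil_clean (S : pzRingType) :
  quot_upper_nilradical_iso S 'Z_3 -> weakly_nil_clean S.
Proof.
move=> [phi [_ ker]] x.
have ker_nil y : phi y = 0 -> nilpotent_el y by move=> /ker [I [[_ nilI] Iy]]; exact: nilI.
have one_idem : idempotent_el (1 : S) by rewrite /idempotent_el mulr1.
have [phi0|phi1|phi2] := Z3_cases (phi x).
- exists x, 0; split; first exact: ker_nil.
  by split; [rewrite /idempotent_el mul0r | left; rewrite addr0].
- exists (x - 1), 1; split; first by apply: ker_nil; rewrite rmorphB rmorph1 phi1 subrr.
  by split=> //; left; rewrite subrK.
- exists (x + 1), 1; split; first by apply: ker_nil; rewrite rmorphD rmorph1 phi2; apply/eqP.
  by split=> //; right; rewrite addrK.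
Qed.

Theorem theorem3 (R : pzRingType) :
  weakly_nil_clean R <->
  (nil_clean R \/
   exists (R1 R2 : pzRingType),
     ring_iso R (R1 * R2)%type /\ nil_clean R1 /\
     quot_upper_nilradical_iso R2 'Z_3).
Proof.
split=> [W|]; last first.
  case=> [/nil_clean_weakly_nil_clean //|[R1 [R2 [iso [NC1 Q2]]]]].
  exact: weakly_nil_clean_ring_iso iso (weakly_nil_clean_prod NC1 (quot_Z3_weakly_nil_clean Q2)).
have [n six_n0] := weakly_nil_clean_nilpotent6 W.
have [c [cc c3 c2]] : exists c : nat, [/\ idempotent_el (c%:R : R),
    (3 ^ n)%:R * c%:R = 0 :> R & (2 ^ n)%:R * (1 - c%:R) = 0 :> R].
  apply: coprime_natr_idempotent; rewrite ?expn_gt0 ?coprimeXl ?coprimeXr //.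
  by rewrite -expnMn natrX six_n0.
pose ce := CentralIdempotent cc (fun x => commr_sym (commr_nat x c)).
have [c0|cnz] := eqVneq (c%:R : R) 0.
  left; apply: weakly_nil_clean_nilpotent2 W _; exists n.
  by move: c2; rewrite c0 subr0 mulr1 natrX.
right; exists (corner (cidem_compl ce)), (corner ce).
split; first exact: ring_iso_corner_split.
split.
  exact: weakly_nil_clean_nilpotent2 (weakly_nil_clean_corner (ce := cidem_compl ce) W)
    (corner_natr_nilpotent (ce := cidem_compl ce) c2).
exact: weakly_nil_clean_quot_Z3 (weakly_nil_clean_corner (ce := ce) W)
  (corner_natr_nilpotent (ce := ce) c3) (corner_oner_neq0 (ce := ce) cnz).
Qed.
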